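(* Let $K$ be a finite field of characteristic $p$ and order $q$, let $s$ be a positive integer with $\gcd(s,q-1)=1$, and let $w\in K$. Then: (i) $Q^{(1,-1)}_{1,w}=Q^{(1,-1)}_{1,-w}$; (ii) if $p$ is odd, then $Q^{(1,-1)}_{1,1}-1=Q^{(1,-1)}_{1,-1}-1=Q^{(1,1)}_{1,-1}$; (iii) if $p$ is odd and $w=2^{1/s-1}$, then $Q^{(1,1)}_{1,w}$ is odd; otherwise $Q^{(1,1)}_{1,w}$ is even.
   Context: Let $1/s$ denote the inverse of $s$ modulo $q-1$, so $x\mapsto x^{1/s}$ is the inverse permutation of $x\mapsto x^s$ on $K$. For $t=(t_1,t_2)\in K^2$ and $a,b\in K$, $Q^t_{a,b}$ denotes the number of $(v_1,v_2)\in K^2$ with $t_1v_1+t_2v_2=a$ and $(v_1^s+v_2^s)^{1/s}=b$. *)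

From HB Require Import structures.
From mathcomp Require Import all_boot all_order all_algebra.
Set Implicit Arguments. Unset Strict Implicit. Unset Printing Implicit Defensive.
Import GRing.Theory.
Local Open Scope ring_scope.

(* q = #|K|. The exponent 1/s : the inverse of s modulo q-1, chosen in
   {1, ..., q-1} (so that x^(1/s) also maps 0 to 0). *)
Definition inv_exp (K : finFieldType) (s : nat) : nat :=
  let q := #|K| in
  odflt 1%N (omap (@nat_of_ord q)
    [pick t : 'I_q | (0 < t)%N && (s * t == 1 %[mod q.-1])%N]).

Definition rootS (K : finFieldType) (s : nat) (x : K) : K := x ^+ inv_exp K s.

Definition Qcount (K : finFieldType) (s : nat) (t : K * K) (a b : K) : nat :=
  #|[set v : K * K | (t.1 * v.1 + t.2 * v.2 == a)
                     && (rootS s (v.1 ^+ s + v.2 ^+ s) == b)]|.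

(* The map x |-> x^s is a permutation of K commuting with negation, so
   Q^t_{a,b} counts the v with t.v = a and v1^s + v2^s = b^s.  Part (i) is
   the bijection (v1, v2) |-> (-v2, -v1).  For (ii), the change of chart
   (v1, v2) |-> (1/v1, v2/v1) matches the solutions for t = (1, -1) with
   v1 <> 0 against those for t = (1, 1), leaving only (0, -1) over.  For
   (iii), the swap (v1, v2) |-> (v2, v1) is an involution of the solution
   set, so its parity is that of its fixed points: (1/2, 1/2) when p is odd
   and 2 (1/2)^s = w^s, that is w = 2^(1/s) / 2; and none at all when p = 2. *)

From HB Require Import structures.
From mathcomp Require Import all_boot all_order all_algebra finfield ring.
Set Implicit Arguments. Unset Strict Implicit. Unset Printing Implicit Defensive.
Import GRing.Theory.
Local Open Scope ring_scope.

Lemma odd_card_involution (T : finType) (f : T -> T) (A : {set T}) :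
  involutive f -> {mono f : x / x \in A} ->
  odd #|A| = odd #|[set x in A | f x == x]|.
Proof.
move=> fK fA; pose moved := A :\: [set x | f x == x].
have even_moved : ~~ odd #|moved|.
  pose up := [set x | (enum_rank x < enum_rank (f x))%N].
  rewrite -(cardsID up) -[X in (X + _)%N](card_preimset _ (inv_inj fK)).
  suff -> : f @^-1: (moved :&: up) = moved :\: up by rewrite addnn odd_double.
  apply/setP => x; rewrite !inE fK fA.
  case: (x \in A); rewrite ?andbF //.
  case: (eqVneq (f x) x) => [_|fx_neq_x]; rewrite /= ?andbF ?andbT //.
  by rewrite ltn_neqAle -leqNgt val_eqE (inj_eq enum_rank_inj) fx_neq_x.
by rewrite -(cardsID [set x | f x == x] A) oddD (negbTE even_moved) addbF setIdE.
Qed.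

Lemma expf_mod_card_pred (F : finFieldType) (x : F) n :
  (0 < n)%N -> n = 1 %[mod #|F|.-1] -> x ^+ n = x.
Proof.
move=> n_gt0 /eqP; rewrite eqn_mod_dvd // => /dvdnP[k def_n].
rewrite -(subnK n_gt0) def_n {n n_gt0 def_n}; elim: k => [|k IHk].
  by rewrite mul0n expr1.
rewrite mulSn -addnA exprD IHk -exprSr prednK ?expf_card //.
exact: ltnW (finNzRing_gt1 F).
Qed.

Lemma natf2_neq0_pchar (R : nzRingType) p :
  p \in [pchar R] -> (2%:R != 0 :> R) = odd p.
Proof.
move=> pcharRp; have p_pr := pcharf_prime pcharRp.
rewrite -(dvdn_pcharf pcharRp) dvdn_prime2 //.
case: (even_prime p_pr) => [-> | p_odd] //.
by rewrite p_odd; apply: contraTneq p_odd => ->.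
Qed.

Lemma card_subset1 (T : finType) (A : {set T}) x :
  A \subset [set x] -> #|A| = (x \in A).
Proof. by rewrite subset1 => /orP[] /eqP ->; rewrite ?cards1 ?set11 ?cards0 ?inE. Qed.

Definition Qpairs (K : finFieldType) (s : nat) (t : K * K) (a c : K) :=
  [set v : K * K | (t.1 * v.1 + t.2 * v.2 == a) && (v.1 ^+ s + v.2 ^+ s == c)].

Lemma odd_card_Qpairs_add (K : finFieldType) (s : nat) (c : K) :
  odd #|Qpairs s (1, 1) 1 c| = (2 != 0 :> K) && ((2^-1) ^+ s *+ 2 == c).
Proof.
rewrite (@odd_card_involution _ (fun v => (v.2, v.1))); first last.
- by move=> [a b]; rewrite !inE /= addrC [b ^+ s + _]addrC.
- by move=> [].
(* In characteristic 2, 2^-1 is the junk value 0^-1 = 0. *)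
have twice_half : (2^-1 + 2^-1 == 1 :> K) = (2 != 0 :> K).
  rewrite -mulr2n -[2^-1 *+ 2]mulr_natl; case: (eqVneq (2 : K) 0) => [-> | /mulfV ->].
    by rewrite mul0r eq_sym oner_eq0.
  by rewrite eqxx.
rewrite (@card_subset1 _ _ ((2^-1, 2^-1) : K * K)).
  by rewrite oddb !inE /= !mul1r twice_half eqxx andbT mulr2n.
apply/subsetP => -[a b]; rewrite !inE /= !mul1r xpair_eqE.
case/andP=> /andP[/eqP twice_a _] /andP[/eqP eq_ba _]; subst b.
by rewrite xpair_eqE andbb; apply/eqP/esym/mulr1_eq; rewrite mulr_natl mulr2n.
Qed.

Section PowerPermutation.

Variables (K : finFieldType) (s : nat).
Hypotheses (s_gt0 : (0 < s)%N) (s_coprime : coprime s #|K|.-1).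

Lemma inv_exp_spec :
  (0 < inv_exp K s)%N /\ (s * inv_exp K s = 1 %[mod #|K|.-1])%N.
Proof.
rewrite /inv_exp; case: pickP => [t /andP[t_gt0 /eqP st1] | no_inv] //=.
have q_gt1 := finNzRing_gt1 K; set m := #|K|.-1.
have m_gt0 : (0 < m)%N by rewrite -ltnS prednK // ltnW.
(* Bezout gives a * s = -1 (mod m), so m - a inverts s modulo m. *)
have [a a_lt /dvdnP[k def_k]] := Bezoutr s m_gt0.
rewrite (eqP s_coprime) in def_k.
have t_lt : (m - a < #|K|)%N.
  by rewrite (leq_ltn_trans (leq_subr _ _)) // ltn_predL ltnW.
have := no_inv (Ordinal t_lt); rewrite /= subn_gt0 a_lt /= => /negbT/negP no_t.
exfalso; apply/no_t/eqP.
rewrite -(modnMDl k) -def_k -addnA [(a * s)%N]mulnC -mulnDr subnKC ?(ltnW a_lt) //.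
by rewrite addnC modnMDl.
Qed.

Lemma expr_inv_exp (x : K) : x ^+ (s * inv_exp K s) = x.
Proof.
have [t_gt0 st1] := inv_exp_spec.
by rewrite expf_mod_card_pred // muln_gt0 s_gt0.
Qed.

Lemma rootSK : cancel (fun x : K => x ^+ s) (rootS s).
Proof. by move=> x; rewrite /rootS -exprM expr_inv_exp. Qed.

Lemma rootSKV : cancel (rootS s) (fun x : K => x ^+ s).
Proof. by move=> x; rewrite /rootS -exprM mulnC expr_inv_exp. Qed.

Lemma eq_rootS (x y : K) : (rootS s x == y) = (x == y ^+ s).
Proof. by apply/eqP/eqP => [<- | ->]; rewrite ?rootSKV ?rootSK. Qed.

Lemma exprs_inj : injective (fun x : K => x ^+ s).
Proof. exact: can_inj rootSK. Qed.

Lemma exprNs (x : K) : (- x) ^+ s = - x ^+ s.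
Proof.
suff N1s : (-1) ^+ s = -1 :> K by rewrite exprNn N1s mulN1r.
rewrite -signr_odd; case: (boolP (odd s)) => [_ | s_even]; first exact: expr1.
by apply: exprs_inj; rewrite /= expr1n -signr_odd (negbTE s_even).
Qed.

Lemma QcountE (t : K * K) (a b : K) : Qcount s t a b = #|Qpairs s t a (b ^+ s)|.
Proof. by apply: eq_card => v; rewrite !inE eq_rootS. Qed.

Lemma card_Qpairs_oppr (c : K) :
  #|Qpairs s (1, -1) 1 (- c)| = #|Qpairs s (1, -1) 1 c|.
Proof.
have negswapK : involutive (fun v : K * K => (- v.2, - v.1)).
  by move=> [a b]; rewrite /= !opprK.
rewrite -(card_preimset _ (inv_inj negswapK)); apply: eq_card => -[a b].
by rewrite !inE /= !exprNs !mul1r !mulN1r opprK addrC -opprD eqr_opp [b ^+ s + _]addrC.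
Qed.

Lemma card_Qpairs_subN1 : 1 != -1 :> K ->
  #|Qpairs s (1 : K, -1) 1 (-1)| = #|Qpairs s (1 : K, 1) 1 (-1)|.+1.
Proof.
move=> one_neqN1.
pose psi (v : K * K) := if v.1 == 0 then v else (v.1^-1, v.2 / v.1).
have psiK : involutive psi.
  move=> [a b]; rewrite /psi /=.
  case: (eqVneq a 0) => [->|a_neq0]; first by rewrite eqxx.
  by rewrite /= invr_eq0 (negbTE a_neq0) invrK divfK.
rewrite -(card_preimset _ (inv_inj psiK)).
suff -> : psi @^-1: Qpairs s (1 : K, -1) 1 (-1) = (0, -1) |: Qpairs s (1 : K, 1) 1 (-1).
  by rewrite cardsU1 !inE /= !mul1r add0r eq_sym (negbTE one_neqN1).
apply/setP => -[a b]; rewrite !inE /psi /= !mul1r !mulN1r.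
case: (eqVneq a 0) => [-> | a_neq0] /=.
  rewrite expr0n gtn_eqF // !add0r xpair_eqE eqxx /= eqr_oppLR.
  case: (eqVneq b (-1)) => [-> | b_neqN1] /=; first by rewrite exprNs expr1n eqxx.
  by case: (eqVneq b 1) => [->|]; rewrite ?expr1n ?andbF // (negbTE one_neqN1).
rewrite xpair_eqE (negbTE a_neq0) /=; congr (_ && _).
  by rewrite -(inj_eq (mulIf a_neq0)) mulrBl mulVf // divfK // mul1r subr_eq eq_sym.
rewrite -(inj_eq (mulIf (expf_neq0 s a_neq0))) mulrDl -!exprMn mulVf // divfK //.
rewrite expr1n mulN1r -!addr_eq0; congr (_ == 0); ring.
Qed.

Lemma exprs_half_eq (w : K) :
  ((2^-1) ^+ s *+ 2 == w ^+ s) = (w == rootS s 2 / 2).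
Proof.
by rewrite -(inj_eq exprs_inj) /= expr_div_n rootSKV -exprVn mulr_natl eq_sym.
Qed.

End PowerPermutation.

Theorem lemma4p8 (K : finFieldType) (p : nat) (s : nat) (w : K) :
  p \in [pchar K] -> (0 < s)%N -> coprime s #|K|.-1 ->
  [/\ Qcount s (1 : K, -1 : K) 1 w = Qcount s (1 : K, -1 : K) 1 (- w),
      odd p ->
        ((Qcount s (1 : K, -1 : K) 1 1)%:Z - 1 = (Qcount s (1 : K, -1 : K) 1 (-1))%:Z - 1)%R
        /\ ((Qcount s (1 : K, -1 : K) 1 (-1))%:Z - 1 = (Qcount s (1 : K, 1 : K) 1 (-1))%:Z)%R
    & odd (Qcount s (1 : K, 1 : K) 1 w) = odd p && (w == rootS s 2 / 2)].
Proof.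
move=> pcharKp s_gt0 s_coprime; rewrite !QcountE // !exprNs // expr1n.
split.
- by rewrite card_Qpairs_oppr.
- move=> p_odd; have one_neqN1 : 1 != -1 :> K.
    by rewrite -addr_eq0 (natf2_neq0_pchar pcharKp).
  rewrite -(card_Qpairs_oppr s_gt0 s_coprime 1) card_Qpairs_subN1 //.
  by split=> //; rewrite -addn1 PoszD addrK.
- by rewrite odd_card_Qpairs_add exprs_half_eq // (natf2_neq0_pchar pcharKp).
Qed.
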